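(* Let $\sigma$ be a 2-structure and $X\subsetneq V(\sigma)$ with $\sigma[X]$ prime; write $\overline{X}=V(\sigma)\setminus X$ and $\Gamma=\Gamma_{(\sigma,\overline{X})}$. Suppose Statement (S3) holds (there is no $Y\subseteq\overline{X}$ with $|Y|=3$ and $\sigma[X\cup Y]$ prime). Let $B_q\in q_{(\sigma,\overline{X})}$. For each $v\in\overline{X}\setminus B_q$, the sets $N^+_v=\{x\in B_q:\{x,v\}\in E(\Gamma)\}$ and $N^-_v=\{x\in B_q:\{x,v\}\notin E(\Gamma)\}$ are modules of $\sigma[B_q]$. Moreover, if $N^+_v\neq\emptyset$ and $N^-_v\neq\emptyset$, then: (1) if $B_q=\langle X\rangle^{(e,f)}_\sigma$ with $e,f\in E(\sigma)$, then $(z,x)\in e$ and $(x,z)\in f$ for all $z\in N^-_v$, $x\in N^+_v$; (2) if $B_q=X^{(e,f)}_\sigma(\alpha)$ with $\alpha\in X$ and $e,f\in E(\sigma)$, then $(z,x)\in f$ and $(x,z)\in e$ for all $z\in N^-_v$, $x\in N^+_v$.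
   Context: A 2-structure $\sigma$ consists of a vertex set $V(\sigma)$ and an equivalence relation $\equiv_\sigma$ on ordered pairs of distinct vertices; $E(\sigma)$ is its set of classes; $\sigma[W]$ is the induced 2-structure on $W$. A module is a set $M$ such that for all $x,y\in M$ and $v\notin M$, $(x,v)\equiv_\sigma(y,v)$ and $(v,x)\equiv_\sigma(v,y)$; $\sigma$ is prime if $|V(\sigma)|\geq3$ and its only modules are $\emptyset$, $V(\sigma)$ and singletons. Given $\sigma[X]$ prime: ${\rm Ext}_\sigma(X)=\{v\in\overline{X}:\sigma[X\cup\{v\}]\text{ prime}\}$; $\langle X\rangle_\sigma=\{v\in\overline{X}: X\text{ is a module of }\sigma[X\cup\{v\}]\}$; for $\alpha\in X$, $X_\sigma(\alpha)=\{v\in\overline{X}:\{\alpha,v\}\text{ is a module of }\sigma[X\cup\{v\}]\}$. For $e,f\in E(\sigma)$: $\langle X\rangle^{(e,f)}_\sigma=\{v\in\langle X\rangle_\sigma:(v,\alpha)\in e,(\alpha,v)\in f\}$ for any $\alpha\in X$; $X^{(e,f)}_\sigma(\alpha)=\{v\in X_\sigma(\alpha):(v,\alpha)\in e,(\alpha,v)\in f\}$. $q_{(\sigma,\overline{X})}$ is the partition of $\overline{X}$ formed by the nonempty sets among ${\rm Ext}_\sigma(X)$, $\langle X\rangle^{(e,f)}_\sigma$, $X^{(e,f)}_\sigma(\alpha)$ ($e,f\in E(\sigma)$, $\alpha\in X$). The outside graph $\Gamma_{(\sigma,\overline{X})}$ has vertex set $\overline{X}$ and edges the 2-element sets $Y\subseteq\overline{X}$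 with $\sigma[X\cup Y]$ prime. *)

(* A (finite) 2-structure on the vertex set V(sigma) = T
   (a finType) is given by a boolean relation [eqv] on ordered pairs,
   required to be an equivalence relation on pairs of distinct vertices. *)
From mathcomp Require Import all_boot.
Set Implicit Arguments.
Unset Strict Implicit.
Unset Printing Implicit Defensive.

Section TwoStructures.
Variable T : finType.
Variable eqv : rel (T * T).

Definition offdiag (p : T * T) : bool := p.1 != p.2.

Definition is_2structure : Prop :=
  [/\ (forall p, offdiag p -> eqv p p),
      (forall p q, offdiag p -> offdiag q -> eqv p q -> eqv q p) &
      (forall p q r, offdiag p -> offdiag q -> offdiag r ->
           eqv p q -> eqv q r -> eqv p r)].

Definition eclass (p : T * T) : {set T * T} :=
  [set q | offdiag q & eqv p q].

Definition is_class (e : {set T * T}) : Prop :=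
  exists2 p, offdiag p & e = eclass p.

Definition module (W M : {set T}) : bool :=
  (M \subset W) &&
  [forall x in M, forall y in M, forall v in W :\: M,
      eqv (x, v) (y, v) && eqv (v, x) (v, y)].

Definition prime2 (W : {set T}) : bool :=
  (2 < #|W|) &&
  [forall M : {set T}, module W M ==>
      [|| M == set0, M == W | #|M| == 1]].

Section Outside.
Variable X : {set T}.

Definition Ext : {set T} := [set v | (v \notin X) && prime2 (v |: X)].

Definition spanX : {set T} := [set v | (v \notin X) && module (v |: X) X].

Definition Xal (a : T) : {set T} :=
  [set v | (v \notin X) && module (v |: X) [set a; v]].

(* <X>^(e,f)_sigma ; alpha ranges over X (the choice of alpha is irrelevant
   for v in <X>_sigma, we require it for every alpha in X) *)
Definition spanXef (e f : {set T * T}) : {set T} :=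
  [set v in spanX | [forall a in X, ((v, a) \in e) && ((a, v) \in f)]].

Definition Xalef (a : T) (e f : {set T * T}) : {set T} :=
  [set v in Xal a | ((v, a) \in e) && ((a, v) \in f)].

Definition in_q (B : {set T}) : Prop :=
  B != set0 /\
  (B = Ext \/
   exists e f, [/\ is_class e, is_class f &
     (B = spanXef e f \/ exists2 a, a \in X & B = Xalef a e f)]).

Definition gamma_edge (u w : T) : bool :=
  [&& u \notin X, w \notin X, u != w & prime2 (X :|: [set u; w])].

Definition S3 : Prop :=
  ~ exists Y : {set T},
      [/\ Y \subset ~: X, #|Y| = 3 & prime2 (X :|: Y)].

End Outside.
End TwoStructures.

(* Fix v outside X ∪ B, a vertex x of B adjacent to v in the outside graph
   and a vertex z of B that is not. By (S3) the structure on X ∪ {x, z, v}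
   is not prime, while its restriction to W = X ∪ {x, v} is; so it has a
   nontrivial module that is either W itself or a pair {w, z} with w in W.
   The pair {x, z} cannot occur: swapping x and z would transport the
   primality of X ∪ {x, v} to X ∪ {z, v}. Confronting the remaining cases
   with the defining property of the block B (z in Ext(X), in <X> or in
   X(alpha)) either produces a nontrivial module of sigma[X] or
   sigma[X ∪ {z}], or puts v into B, or fixes the classes of (z, x) and
   (x, z). Hence all pairs between N+ and N- lie in two fixed classes, which
   makes N+ and N- modules of sigma[B]. *)

From mathcomp Require Import all_boot perm.
Set Implicit Arguments.
Unset Strict Implicit.
Unset Printing Implicit Defensive.

Section TwoStructure.
Variables (T : finType) (eqv : rel (T * T)).
Hypothesis E : is_2structure eqv.
Implicit Types (S W M : {set T}) (e f : {set T * T}).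

Lemma eqv_refl p : offdiag p -> eqv p p.
Proof. by case: E => H _ _; apply: H. Qed.

Lemma eqv_sym p q : eqv p q -> offdiag p -> offdiag q -> eqv q p.
Proof. by case: E => _ H _ pq dp dq; apply: H. Qed.

Lemma eqv_trans q p r :
  eqv p q -> eqv q r -> offdiag p -> offdiag q -> offdiag r -> eqv p r.
Proof. by case: E => _ _ H pq qr dp dq dr; apply: H pq qr. Qed.

Lemma eqv_congr p q p' q' :
  eqv p q -> eqv p p' -> eqv q q' ->
  offdiag p -> offdiag q -> offdiag p' -> offdiag q' -> eqv p' q'.
Proof.
move=> pq pp' qq' dp dq dp' dq'.
exact: eqv_trans (eqv_sym pp' dp dp') (eqv_trans pq qq' dp dq dq') dp' dp dq'.
Qed.

Lemma class_closed e p q :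
  is_class eqv e -> p \in e -> eqv p q -> offdiag q -> q \in e.
Proof.
case=> r dr ->; rewrite !inE => /andP[dp rp] pq dq.
by rewrite dq (eqv_trans rp pq dr dp dq).
Qed.

Lemma class_eqv e p q : is_class eqv e -> p \in e -> q \in e -> eqv p q.
Proof.
case=> r dr ->; rewrite !inE => /andP[dp rp] /andP[dq rq].
exact: eqv_trans (eqv_sym rp dr dp) rq dp dr dq.
Qed.

Lemma setU_set2 S u w : S :|: [set u; w] = u |: (w |: S).
Proof. by rewrite setUCA [S :|: _]setUC. Qed.

Lemma moduleP W M :
  reflect (M \subset W /\ forall x y w, x \in M -> y \in M -> w \in W -> w \notin M ->
             eqv (x, w) (y, w) && eqv (w, x) (w, y))
          (module eqv W M).
Proof.
apply: (iffP andP) => -[sMW H]; split=> //.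
  move=> x y w xM yM wW wM; move/forallP/(_ x)/implyP/(_ xM)/forallP/(_ y): H.
  by move/implyP/(_ yM)/forallP/(_ w); rewrite inE wM wW.
apply/forall_inP => x xM; apply/forall_inP => y yM; apply/forall_inP => w.
by rewrite inE => /andP[wM wW]; apply: H.
Qed.

Lemma module_setI W W' M : W \subset W' -> module eqv W' M -> module eqv W (M :&: W).
Proof.
move=> sWW' /moduleP[_ H]; apply/moduleP; split=> [|x y w]; first exact: subsetIr.
rewrite !inE => /andP[xM _] /andP[yM _] wW; rewrite wW andbT.
by apply: H => //; apply: (subsetP sWW').
Qed.

Lemma module_setU1P S z :
  z \notin S ->
  reflect {in S &, forall a b, eqv (a, z) (b, z) && eqv (z, a) (z, b)}
          (module eqv (z |: S) S).
Proof.
move=> zS; apply: (iffP (moduleP _ _)) => [[_ H] a b aS bS | H].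
  by apply: H; rewrite ?setU11.
split; first exact: subsetUr.
by move=> a b t aS bS /setU1P[-> _|-> //]; apply: H.
Qed.

Lemma module_split W (p : pred T) :
  (forall x1 x2 z1 z2, x1 \in W -> x2 \in W -> z1 \in W -> z2 \in W ->
     p x1 -> p x2 -> ~~ p z1 -> ~~ p z2 ->
     eqv (x1, z1) (x2, z2) && eqv (z1, x1) (z2, x2)) ->
  module eqv W [set x in W | p x] /\ module eqv W [set x in W | ~~ p x].
Proof.
move=> H; split; apply/moduleP; split; try by apply/subsetP => t; rewrite inE => /andP[].
  move=> x y w; rewrite !inE => /andP[xW px] /andP[yW py] wW.
  by rewrite wW /= => pw; apply: H.
move=> x y w; rewrite !inE => /andP[xW px] /andP[yW py] wW.
by rewrite wW /= negbK andbC => pw; apply: H.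
Qed.

Lemma prime2_gt2 W : prime2 eqv W -> 2 < #|W|.
Proof. by case/andP. Qed.

Lemma prime2P W M :
  prime2 eqv W -> module eqv W M -> [\/ M = set0, M = W | #|M| = 1].
Proof. by case/andP=> _ /forall_inP/(_ M) H /H; case/or3P=> /eqP; constructor. Qed.

Lemma prime2_moduleF W M :
  prime2 eqv W -> module eqv W M -> M != set0 -> M != W -> #|M| != 1 -> False.
Proof. by move=> pW /(prime2P pW) []->; rewrite eqxx. Qed.

Lemma prime2Pn W :
  2 < #|W| -> ~~ prime2 eqv W ->
  exists M, [/\ module eqv W M, M != set0, M != W & #|M| != 1].
Proof.
rewrite /prime2 => -> /forallPn[M]; rewrite negb_imply !negb_or => /andP[mM].
by case/and3P=> M0 MW M1; exists M.
Qed.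

Lemma module_setU1 W M z :
  prime2 eqv W -> z \notin W -> module eqv (z |: W) M ->
  M != set0 -> M != z |: W -> #|M| != 1 ->
  M = W \/ exists2 w, w \in W & M = [set w; z].
Proof.
move=> pW zW mM M0 MzW M1.
have M_split : M = (M :&: W) :|: (M :&: [set z]).
  by rewrite -setIUr setUC; apply/esym/setIidPl; case/andP: mM.
have [zM|zM] := boolP (z \in M).
  have Mz : M :&: [set z] = [set z] by apply/setIidPr; rewrite sub1set.
  rewrite Mz in M_split.
  case: (prime2P pW (module_setI (subsetUr [set z] W) mM)) => [|MW|/eqP/cards1P[w MW]].
  - by move=> MW; rewrite MW set0U in M_split; rewrite M_split cards1 in M1.
  - by rewrite MW setUC in M_split; rewrite M_split eqxx in MzW.
  - right; exists w; last by rewrite M_split MW.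
    by move/setP/(_ w): MW; rewrite !inE eqxx => /andP[].
have Mz : M :&: [set z] = set0.
  by apply/setP => t; rewrite !inE; apply: contraNF zM => /andP[tM /eqP <-].
rewrite Mz setU0 in M_split.
case: (prime2P pW (module_setI (subsetUr [set z] W) mM)) => [MW|MW|MW1].
- by rewrite M_split MW eqxx in M0.
- by left; rewrite M_split.
- by rewrite M_split MW1 in M1.
Qed.

Definition eqv_preserving (f : {perm T}) W :=
  {in W &, forall a b, a != b -> eqv (a, b) (f a, f b)}.

Lemma module_imset (f : {perm T}) W M :
  eqv_preserving f W -> module eqv W M -> module eqv (f @: W) (f @: M).
Proof.
move=> fW /moduleP[sMW HM]; apply/moduleP; split; first exact: imsetS.
move=> _ _ _ /imsetP[x xM ->] /imsetP[y yM ->] /imsetP[t tW ->].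
rewrite mem_imset ?inE; last exact: perm_inj.
move=> tM; have xW := subsetP sMW x xM; have yW := subsetP sMW y yM.
have ne a : a \in M -> (a != t) && (t != a).
  by move=> aM; rewrite [t == a]eq_sym andbb; apply: contraNneq tM => <-.
have df a b : a != b -> offdiag (f a, f b) by rewrite /offdiag /= (inj_eq perm_inj).
case/andP: (ne x xM) => xt tx; case/andP: (ne y yM) => yt ty.
case/andP: (HM x y t xM yM tW tM) => h1 h2; apply/andP; split.
  exact: eqv_congr h1 (fW _ _ xW tW xt) (fW _ _ yW tW yt) xt yt (df _ _ xt) (df _ _ yt).
exact: eqv_congr h2 (fW _ _ tW xW tx) (fW _ _ tW yW ty) tx ty (df _ _ tx) (df _ _ ty).
Qed.

Lemma prime2_imset (f : {perm T}) W :
  eqv_preserving f W -> prime2 eqv W -> prime2 eqv (f @: W).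
Proof.
move=> fW pW; apply/andP; split; first by rewrite card_imset ?prime2_gt2 //; apply: perm_inj.
apply/forall_inP => M mM.
have fK (A : {set T}) : (f^-1)%g @: (f @: A) = A.
  by rewrite -imset_comp (eq_imset _ (permK f)) imset_id.
have fVW : eqv_preserving (f^-1)%g (f @: W).
  move=> _ _ /imsetP[a aW ->] /imsetP[b bW ->]; rewrite !permK (inj_eq perm_inj) => ab.
  by apply: (eqv_sym (fW a b aW bW ab) ab); rewrite /offdiag /= (inj_eq perm_inj).
have mM' : module eqv W ((f^-1)%g @: M) by rewrite -(fK W); apply: module_imset.
have -> : M = f @: ((f^-1)%g @: M).
  by rewrite -imset_comp (eq_imset _ (permKV f)) imset_id.
rewrite card_imset; last exact: perm_inj.
by case: (prime2P pW mM') => ->; rewrite ?imset0 eqxx ?orbT.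
Qed.

Definition twin u w S :=
  forall s, s \in S -> s != u -> s != w -> eqv (u, s) (w, s) && eqv (s, u) (s, w).

Lemma twin_sym u w S : twin u w S -> twin w u S.
Proof.
move=> H s sS sw su; case/andP: (H s sS su sw) => h1 h2.
by rewrite (eqv_sym h1) ?(eqv_sym h2) // /offdiag /= eq_sym.
Qed.

Lemma twin_sub u w S S' : S' \subset S -> twin u w S -> twin u w S'.
Proof. by move=> sS'S H s /(subsetP sS'S); apply: H. Qed.

Lemma module2_twin u w S : module eqv S [set u; w] -> twin u w S.
Proof.
by case/moduleP=> _ H s sS su sw; apply: H; rewrite ?inE ?eqxx ?orbT ?negb_or ?su.
Qed.

Lemma twin_module2 u w S : u \in S -> w \in S -> twin u w S -> module eqv S [set u; w].
Proof.
move=> uS wS H; apply/moduleP; split; first by rewrite subUset !sub1set uS.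
have refl2 a b : a != b -> eqv (a, b) (a, b) && eqv (b, a) (b, a).
  by move=> ab; rewrite !eqv_refl // /offdiag /= eq_sym.
move=> x y s; rewrite !inE => /orP[]/eqP-> /orP[]/eqP-> sS /norP[su sw].
- by apply: refl2; rewrite eq_sym.
- exact: H.
- exact: (twin_sym H).
- by apply: refl2; rewrite eq_sym.
Qed.

Lemma twin_trans w u v S : v \notin S -> twin u v S -> twin v w S -> twin u w S.
Proof.
move=> vS Huv Hvw s sS su sw; have sv : s != v by apply: contraNneq vS => <-.
case/andP: (Huv s sS su sv) => h1 h2; case/andP: (Hvw s sS sv sw) => h3 h4.
apply/andP; split.
  by apply: eqv_trans h1 h3 _ _ _; rewrite /offdiag /= eq_sym.
exact: eqv_trans h2 h4 _ _ _.
Qed.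

Lemma twin_setU1 u w S : twin u w S -> twin u w (w |: S).
Proof. by move=> H s; case/setU1P => [->|]; [rewrite eqxx | apply: H]. Qed.

Lemma twin_classl u w S e s :
  twin u w S -> is_class eqv e -> s \in S -> s != u -> s != w ->
  (u, s) \in e -> (w, s) \in e.
Proof.
move=> H ce sS su sw us; case/andP: (H s sS su sw) => h _.
by apply: class_closed ce us h _; rewrite /offdiag /= eq_sym.
Qed.

Lemma twin_classr u w S e s :
  twin u w S -> is_class eqv e -> s \in S -> s != u -> s != w ->
  (s, u) \in e -> (s, w) \in e.
Proof.
move=> H ce sS su sw su_e; case/andP: (H s sS su sw) => _.
by move/(class_closed ce su_e); apply.
Qed.

Lemma imset_tperm_out u w S : u \notin S -> w \notin S -> tperm u w @: S = S.
Proof.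
move=> uS wS; rewrite -[RHS]imset_id; apply: eq_in_imset => t tS.
by apply: tpermD; apply: contraTneq tS => <-.
Qed.

Lemma imset_tperm_setU1 u w S :
  u \notin S -> w \notin S -> tperm u w @: (u |: S) = w |: S.
Proof. by move=> uS wS; rewrite imsetU1 tpermL imset_tperm_out. Qed.

Lemma twin_eqv_preserving u w S :
  twin u w S -> u \notin S -> w \notin S -> eqv_preserving (tperm u w) (u |: S).
Proof.
move=> H uS wS a b.
have ne t : t \in S -> (u != t) && (w != t).
  by move=> tS; apply/andP; split; apply: contraTneq tS => <-.
have Htw t : t \in S -> eqv (u, t) (w, t) && eqv (t, u) (t, w).
  by move=> tS; case/andP: (ne t tS) => ut wt; apply: H; rewrite // eq_sym.
rewrite !inE => /orP[/eqP->|aS] /orP[/eqP->|bS]; rewrite ?eqxx // => ab.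
- by case/andP: (ne b bS) => ub wb; rewrite tpermL tpermD //; case/andP: (Htw b bS).
- by case/andP: (ne a aS) => ua wa; rewrite tpermL tpermD //; case/andP: (Htw a aS).
- case/andP: (ne a aS) => ua wa; case/andP: (ne b bS) => ub wb.
  by rewrite !tpermD //; apply: eqv_refl.
Qed.

Lemma twin_prime2 u w S :
  twin u w S -> u \notin S -> w \notin S -> prime2 eqv (u |: S) -> prime2 eqv (w |: S).
Proof.
move=> H uS wS; rewrite -(imset_tperm_setU1 uS wS).
exact/prime2_imset/(twin_eqv_preserving H uS wS).
Qed.

Section Outside.
Variable X : {set T}.
Hypothesis pX : prime2 eqv X.

Lemma prime2_nonempty : exists a, a \in X.
Proof. by apply/set0Pn; rewrite -card_gt0; apply: leq_trans (prime2_gt2 pX). Qed.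

Lemma module_setU1_twinF a z :
  a \in X -> z \notin X -> module eqv (z |: X) X -> twin a z X -> False.
Proof.
move=> aX zX /moduleP[_ Hz] Ht.
have cX : 1 < #|X :\ a| by move: (prime2_gt2 pX); rewrite (cardsD1 a X) aX.
apply: (prime2_moduleF pX (M := X :\ a)).
- apply/moduleP; split=> [|x y t]; first exact: subD1set.
  rewrite !inE => /andP[xa xX] /andP[ya yX] tX; rewrite tX andbT negbK => /eqP->.
  have ne t' : t' \in X -> (t' != z) && (z != t').
    by move=> tX'; rewrite [z == _]eq_sym andbb; apply: contraTneq tX' => ->.
  case/andP: (ne x xX) => xz zx; case/andP: (ne y yX) => yz zy.
  case/andP: (Ht x xX xa xz) => h1 h2; case/andP: (Ht y yX ya yz) => h3 h4.
  case/andP: (Hz x y z xX yX (setU11 z X) zX) => h5 h6.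
  have ax : a != x by rewrite eq_sym.
  have ay : a != y by rewrite eq_sym.
  rewrite (eqv_trans (eqv_trans h2 h5 xa xz yz) (eqv_sym h4 ya yz) xa yz ya).
  exact: eqv_trans (eqv_trans h1 h6 ax zx zy) (eqv_sym h3 ay zy) ax zy ay.
- by rewrite -card_gt0; apply: ltnW.
- by apply/eqP => /setP/(_ a); rewrite !inE eqxx aX.
- by rewrite gtn_eqF.
Qed.

Lemma twin_uniq a b z :
  a \in X -> b \in X -> z \notin X -> twin a z X -> twin b z X -> a = b.
Proof.
move=> aX bX zX Ha Hb; apply/eqP/negPn/negP => ab.
have Hab : twin a b X := twin_trans zX Ha (twin_sym Hb).
apply: (prime2_moduleF pX (twin_module2 aX bX Hab)); rewrite ?cards2 ?ab //.
  by apply/set0Pn; exists a; rewrite !inE eqxx.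
by apply/eqP => X2; move: (prime2_gt2 pX); rewrite -X2 cards2 ab.
Qed.

Lemma twin_Ext z v :
  twin z v X -> z \notin X -> v \notin X -> z \in Ext eqv X -> v \in Ext eqv X.
Proof. by move=> H zX vX; rewrite !inE zX vX; apply: twin_prime2. Qed.

Lemma twin_spanXef z v e f :
  is_class eqv e -> is_class eqv f -> twin z v X -> z \notin X -> v \notin X ->
  z \in spanXef eqv X e f -> v \in spanXef eqv X e f.
Proof.
move=> ce cf H zX vX; rewrite !inE zX vX /= => /andP[mX /forall_inP Hz].
apply/andP; split.
  rewrite -(imset_tperm_setU1 zX vX) -{2}(imset_tperm_out zX vX).
  exact: module_imset (twin_eqv_preserving H zX vX) mX.
apply/forall_inP => a aX; case/andP: (Hz a aX) => za az.
have [a_z a_v] : a != z /\ a != v by split; apply: contraTneq aX => ->.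
by rewrite (twin_classl H ce aX a_z a_v za) (twin_classr H cf aX a_z a_v az).
Qed.

Lemma twin_Xalef z v a e f :
  is_class eqv e -> is_class eqv f -> twin z v X -> z \notin X -> v \notin X ->
  a \in X -> z \in Xalef eqv X a e f -> v \in Xalef eqv X a e f.
Proof.
move=> ce cf H zX vX aX; rewrite !inE zX vX /= => /andP[mX /andP[za az]].
have [a_z a_v] : a != z /\ a != v by split; apply: contraTneq aX => ->.
rewrite (twin_classl H ce aX a_z a_v za) (twin_classr H cf aX a_z a_v az) !andbT.
have -> : [set a; v] = tperm z v @: [set a; z].
  by rewrite imsetU1 imset_set1 tpermL tpermD // eq_sym.
rewrite -(imset_tperm_setU1 zX vX).
exact: module_imset (twin_eqv_preserving H zX vX) mX.
Qed.

Hypothesis S3X : S3 eqv X.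

Lemma nonedge_twin_cases x z v :
  x \notin X -> z \notin X -> v \notin X -> z != v ->
  gamma_edge eqv X x v -> ~~ gamma_edge eqv X z v ->
  let W := X :|: [set x; v] in
  [\/ {in W &, forall a b, eqv (a, z) (b, z) && eqv (z, a) (z, b)},
      exists2 a, a \in X & twin a z W | twin v z W].
Proof.
move=> xX zX vX zv /and4P[_ _ xv pW] ngz W.
have xz : x != z by apply: contraNneq ngz => <-; rewrite /gamma_edge xX vX xv.
have zW : z \notin W by rewrite !inE !negb_or zX eq_sym xz.
have [M [mM M0 MU M1]] : exists M, [/\ module eqv (z |: W) M, M != set0,
                                         M != z |: W & #|M| != 1].
  apply: prime2Pn; first by rewrite cardsU1 zW ltnW // ltnS prime2_gt2.
  apply/negP => pU; apply: S3X; exists (z |: [set x; v]); split.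
  - by rewrite !subUset !sub1set !inE zX xX vX.
  - by rewrite cardsU1 cards2 xv !inE negb_or eq_sym xz zv.
  - by rewrite setUCA.
case: (module_setU1 pW zW mM M0 MU M1) => [MW | [w wW Mwz]].
  by constructor 1; apply/(module_setU1P zW); rewrite MW in mM.
have Hw : twin w z W.
  by rewrite Mwz in mM; exact: twin_sub (subsetUr _ _) (module2_twin mM).
move: wW; rewrite !inE => /orP[wX | /orP[]/eqP wE]; first by constructor 2; exists w.
  exfalso; move: ngz; rewrite /gamma_edge zX vX zv /= setU_set2.
  have Hxz : twin x z (v |: X) by rewrite -wE; apply: twin_sub Hw; rewrite /W setU_set2 subsetUr.
  rewrite (twin_prime2 Hxz) //; first by rewrite !inE negb_or xv.
    by rewrite !inE negb_or zv.
  by rewrite -setU_set2.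
by constructor 3; rewrite -wE.
Qed.

Lemma Ext_cross_edgeF x z v :
  x \in Ext eqv X -> z \in Ext eqv X -> v \notin X -> v \notin Ext eqv X ->
  gamma_edge eqv X x v -> ~~ gamma_edge eqv X z v -> False.
Proof.
move=> xE zE vX vExt gx ngz; move: (xE) (zE); rewrite !inE => /andP[xX _] /andP[zX pZ].
have zv : z != v by apply: contraNneq vExt => <-.
have cX := prime2_gt2 pX.
have [a0 a0X] := prime2_nonempty.
case: (nonedge_twin_cases xX zX vX zv gx ngz) => [HW | [a aX Ha] | Hv].
- apply: (prime2_moduleF pZ (M := X)).
  + by apply/module_setU1P => //; apply: sub_in2 HW => t tX; rewrite inE tX.
  + by apply/set0Pn; exists a0.
  + by apply/eqP => /setP/(_ z); rewrite setU11 (negbTE zX).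
  + by apply: contraTneq cX => ->.
- have az : a != z by apply: contraTneq aX => ->.
  have Haz : twin a z (z |: X) by apply/twin_setU1/(twin_sub _ Ha)/subsetUl.
  apply: (prime2_moduleF pZ (twin_module2 (setU1r z aX) (setU11 z X) Haz)).
  + by apply/set0Pn; exists a; rewrite !inE eqxx.
  + apply/eqP => X2; move: (subset_leq_card (subsetUr [set z] X)).
    by rewrite -X2 cards2 az => /(leq_trans cX).
  + by rewrite cards2 az.
- have Hzv : twin z v X by apply/twin_sym/(twin_sub _ Hv)/subsetUl.
  by move: vExt; rewrite (twin_Ext Hzv zX vX zE).
Qed.

Lemma spanXef_cross_edge x z v e f :
  is_class eqv e -> is_class eqv f ->
  x \in spanXef eqv X e f -> z \in spanXef eqv X e f ->
  v \notin X -> v \notin spanXef eqv X e f ->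
  gamma_edge eqv X x v -> ~~ gamma_edge eqv X z v -> ((z, x) \in e) /\ ((x, z) \in f).
Proof.
move=> ce cf xS zS vX vS gx ngz; move: (xS) (zS); rewrite !inE.
case/andP=> /andP[xX _] _ /andP[/andP[zX mX] /forall_inP Hz].
have zv : z != v by apply: contraNneq vS => <-.
have xz : x != z by apply: contraNneq ngz => <-.
case: (nonedge_twin_cases xX zX vX zv gx ngz) => [HW | [a aX Ha] | Hv].
- have [a aX] := prime2_nonempty; case/andP: (Hz a aX) => za az.
  have Wa : a \in X :|: [set x; v] by rewrite inE aX.
  have Wx : x \in X :|: [set x; v] by rewrite !inE eqxx orbT.
  case/andP: (HW a x Wa Wx) => h1 h2; split.
    by apply: class_closed ce za h2 _; rewrite /offdiag /= eq_sym.
  exact: class_closed cf az h1 xz.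
- by case: (module_setU1_twinF aX zX mX (twin_sub (subsetUl _ _) Ha)).
- have Hzv : twin z v X by apply/twin_sym/(twin_sub _ Hv)/subsetUl.
  by move: vS; rewrite (twin_spanXef ce cf Hzv zX vX zS).
Qed.

Lemma Xalef_cross_edge x z v a e f :
  is_class eqv e -> is_class eqv f -> a \in X ->
  x \in Xalef eqv X a e f -> z \in Xalef eqv X a e f ->
  v \notin X -> v \notin Xalef eqv X a e f ->
  gamma_edge eqv X x v -> ~~ gamma_edge eqv X z v -> ((z, x) \in f) /\ ((x, z) \in e).
Proof.
move=> ce cf aX xS zS vX vS gx ngz; move: (xS) (zS); rewrite !inE.
case/andP=> /andP[xX _] /andP[xa ax] /andP[/andP[zX mZ] _].
have zv : z != v by apply: contraNneq vS => <-.
have xz : x != z by apply: contraNneq ngz => <-.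
have Ha : twin a z X by apply: twin_sub (subsetUr _ _) (module2_twin mZ).
case: (nonedge_twin_cases xX zX vX zv gx ngz) => [HW | [b bX Hb] | Hv].
- have mX : module eqv (z |: X) X.
    by apply/module_setU1P => //; apply: sub_in2 HW => t tX; rewrite inE tX.
  by case: (module_setU1_twinF aX zX mX Ha).
- have ba := twin_uniq bX aX zX (twin_sub (subsetUl _ _) Hb) Ha; subst b.
  have Wx : x \in X :|: [set x; v] by rewrite !inE eqxx orbT.
  have x_a : x != a by apply: contraNneq xX => ->.
  by split; [apply: twin_classl Hb cf Wx x_a _ ax | apply: twin_classr Hb ce Wx x_a _ xa].
- have Hzv : twin z v X by apply/twin_sym/(twin_sub _ Hv)/subsetUl.
  by move: vS; rewrite (twin_Xalef ce cf Hzv zX vX aX zS).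
Qed.

Lemma in_q_cross_eqv B v :
  in_q eqv X B -> v \notin X -> v \notin B ->
  forall x1 x2 z1 z2, x1 \in B -> x2 \in B -> z1 \in B -> z2 \in B ->
  gamma_edge eqv X x1 v -> gamma_edge eqv X x2 v ->
  ~~ gamma_edge eqv X z1 v -> ~~ gamma_edge eqv X z2 v ->
  eqv (x1, z1) (x2, z2) && eqv (z1, x1) (z2, x2).
Proof.
case=> _ [-> | [e [f [ce cf [-> | [a aX ->]]]]]] vX vB x1 x2 z1 z2 x1B x2B z1B z2B g1 g2 n1 n2.
- by case: (Ext_cross_edgeF x1B z1B vX vB g1 n1).
- have [h1 h2] := spanXef_cross_edge ce cf x1B z1B vX vB g1 n1.
  have [h3 h4] := spanXef_cross_edge ce cf x2B z2B vX vB g2 n2.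
  by rewrite (class_eqv cf h2 h4) (class_eqv ce h1 h3).
- have [h1 h2] := Xalef_cross_edge ce cf aX x1B z1B vX vB g1 n1.
  have [h3 h4] := Xalef_cross_edge ce cf aX x2B z2B vX vB g2 n2.
  by rewrite (class_eqv ce h2 h4) (class_eqv cf h1 h3).
Qed.

End Outside.

End TwoStructure.

Theorem corollary3p4 (T : finType) (eqv : rel (T * T)) (X B : {set T}) :
  is_2structure eqv ->
  X \proper [set: T] ->
  prime2 eqv X ->
  S3 eqv X ->
  in_q eqv X B ->
  forall v, v \in ~: X -> v \notin B ->
  let Np := [set x in B | gamma_edge eqv X x v] in
  let Nm := [set x in B | ~~ gamma_edge eqv X x v] in
  [/\ module eqv B Np, module eqv B Nm &
      (Np != set0 -> Nm != set0 ->
       (forall e f, is_class eqv e -> is_class eqv f ->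
          B = spanXef eqv X e f ->
          forall z x, z \in Nm -> x \in Np -> ((z, x) \in e) /\ ((x, z) \in f)) /\
       (forall a e f, a \in X -> is_class eqv e -> is_class eqv f ->
          B = Xalef eqv X a e f ->
          forall z x, z \in Nm -> x \in Np -> ((z, x) \in f) /\ ((x, z) \in e)))].
Proof.
move=> E _ pX S3X qB v; rewrite inE => vX vB Np Nm.
have [mNp mNm] := module_split (p := gamma_edge eqv X ^~ v) (in_q_cross_eqv E pX S3X qB vX vB).
split=> // _ _; split.
- move=> e f ce cf eB z x /setIdP[zB ngz] /setIdP[xB gx].
  rewrite eB in xB zB vB; exact: (spanXef_cross_edge E pX S3X ce cf xB zB vX vB gx ngz).
- move=> a e f aX ce cf eB z x /setIdP[zB ngz] /setIdP[xB gx].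
  rewrite eB in xB zB vB; exact: (Xalef_cross_edge E pX S3X ce cf aX xB zB vX vB gx ngz).
Qed.
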